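(* Let $\Sigma=\{s_1<s_2<\cdots<s_l\}$ be a set of positive integers with $s_1=1$ and $s_i-s_{i-1}\le 2$ for all $i=2,\ldots,l$. Then $\Sigma$ is a $\delta$-set. Furthermore, there is a caterpillar of order $2l$ that admits a distance $\Sigma$-labeling in which every element of $\Sigma$ is the label of exactly two vertices.
   Context: All graphs are finite and simple; $d(u,v)$ denotes the usual graph distance. For a set $J$ of nonnegative integers, a distance $J$-labeling of $G$ is a function $f:V(G)\to J$ with $f(V(G))=J$ such that whenever two distinct vertices $u,v$ satisfy $f(u)=f(v)=k$, we have $d(u,v)=k$. It is proper if every $k\in J\setminus\{0\}$ is the label of at least two vertices. A finite set $\Sigma$ of nonnegative integers is a $\delta$-set if there exists a graph admitting a proper distance $\Sigma$-labeling. A caterpillar is a tree in which the vertices that are not leaves induce a path (possibly empty). *)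

From mathcomp Require Import all_boot.
Set Implicit Arguments. Unset Strict Implicit. Unset Printing Implicit Defensive.

Definition simple_graph (T : finType) (e : rel T) : Prop :=
  symmetric e /\ irreflexive e.

Definition walk_of_len (T : finType) (e : rel T) (u v : T) (k : nat) : Prop :=
  exists p : seq T, [/\ path e u p, last u p = v & size p = k].

(* d(u,v) = k : the shortest walk from u to v has length k
   (never holds for vertices in different components). *)
Definition dist_is (T : finType) (e : rel T) (u v : T) (k : nat) : Prop :=
  walk_of_len e u v k /\ forall j, j < k -> ~ walk_of_len e u v j.

Definition distance_labeling (T : finType) (e : rel T) (J : seq nat) (f : T -> nat) : Prop :=
  [/\ forall x, f x \in J,
      forall k, k \in J -> exists x, f x = k &
      forall u v, u != v -> f u = f v -> dist_is e u v (f u)].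

Definition proper_distance_labeling (T : finType) (e : rel T) (J : seq nat) (f : T -> nat) : Prop :=
  distance_labeling e J f /\
  forall k, k \in J -> k != 0 -> 1 < #|[pred x | f x == k]|.

Definition delta_set (J : seq nat) : Prop :=
  exists (T : finType) (e : rel T),
    simple_graph e /\ exists f : T -> nat, proper_distance_labeling e J f.

Definition connected_graph (T : finType) (e : rel T) : Prop :=
  forall u v : T, exists k, walk_of_len e u v k.

Definition acyclic (T : finType) (e : rel T) : Prop :=
  ~ exists (x : T) (p : seq T),
      [/\ 2 <= size p, uniq (x :: p), path e x p & e (last x p) x].

Definition tree (T : finType) (e : rel T) : Prop :=
  simple_graph e /\ connected_graph e /\ acyclic e.

Definition degree (T : finType) (e : rel T) (x : T) : nat := #|[pred y | e x y]|.

(* Caterpillar: a tree whose non-leaf vertices (degree <> 1) induce a path (possibly empty),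
   i.e. they can be listed without repetition as q so that two of them are adjacent
   iff they are consecutive in q. *)
Definition caterpillar (T : finType) (e : rel T) : Prop :=
  tree e /\
  exists q : seq T,
    [/\ uniq q,
        forall x, (x \in q) = (degree e x != 1) &
        forall x y, x \in q -> y \in q ->
          e x y = ((index x q).+1 == index y q) || ((index y q).+1 == index x q)].

From mathcomp Require Import all_boot zify.
Set Implicit Arguments. Unset Strict Implicit. Unset Printing Implicit Defensive.

(** Each [s_i] labels two vertices, [(i, false)] at height [l-1-i] and [(i, true)]
    at height [l-1-i+s_i].  The first kind occupy heights [0 .. l-1]; the heights of
    the second kind start at [l] and grow by [s_(i+1) - s_i - 1], which is [0] or [1],
    up to the largest label [top].  So every height [0 .. top] is taken, and twice exactly when
    [s_(i+1) = s_i + 1].  One vertex per height forms the spine path; each repeated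
    [(i, true)] is a leaf hung on the spine one level below.  Every edge changes the
    height by one and the spine climbs monotonically, so the distance between the two
    vertices labelled [s_i] is their height difference [s_i]. *)

Section Graphs.

Variables (T : finType) (e : rel T).

Lemma walk_refl u : walk_of_len e u u 0.
Proof. by exists [::]. Qed.

Lemma walk_rcons u v w k : walk_of_len e u v k -> e v w -> walk_of_len e u w k.+1.
Proof.
case=> p [ep lp sp] evw; exists (rcons p w).
by rewrite rcons_path ep lp evw last_rcons size_rcons sp.
Qed.

Lemma walk_cat u v w j k :
  walk_of_len e u v j -> walk_of_len e v w k -> walk_of_len e u w (j + k).
Proof.
case=> p [ep lp sp] [q [eq lq sq]]; exists (p ++ q).
by rewrite cat_path last_cat lp ep eq lq size_cat sp sq.
Qed.

Lemma walk_sym u v k : symmetric e -> walk_of_len e u v k -> walk_of_len e v u k.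
Proof.
move=> esym [p [ep lp <-]]; elim: p u ep lp => [|x p IHp] u /=.
  by move=> _ ->; apply: walk_refl.
case/andP=> eux ep lp; apply: walk_rcons (IHp x ep lp) _; by rewrite esym.
Qed.

Lemma dist_is_sym u v k : symmetric e -> dist_is e u v k -> dist_is e v u k.
Proof.
move=> esym [wuv min_k]; split=> [|j ltjk /(walk_sym esym)]; first exact: walk_sym.
exact: min_k.
Qed.

Lemma degree_eq1 x w : (forall y, e x y = (y == w)) -> degree e x = 1.
Proof. by move=> exy; rewrite /degree -(card1 w); apply: eq_card => y; rewrite !inE exy. Qed.

Lemma degree_gt1 x y z : e x y -> e x z -> y != z -> 1 < degree e x.
Proof.
move=> exy exz neyz; have <- : #|pred2 y z| = 2 by rewrite card2 neyz.
by apply: subset_leq_card; apply/subsetP => w; rewrite !inE => /orP[] /eqP->.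
Qed.

Variable h : T -> nat.
Hypothesis edge_height : forall u v, e u v -> h u = (h v).+1 \/ h v = (h u).+1.

Lemma path_height_bound u p :
  path e u p -> h (last u p) <= h u + size p /\ h u <= h (last u p) + size p.
Proof.
elim: p u => [|x p IHp] u /=; first by rewrite !addn0.
by case/andP=> /edge_height exu /IHp; lia.
Qed.

Lemma dist_is_height u v k : walk_of_len e u v k -> h u + k = h v -> dist_is e u v k.
Proof.
move=> wuv huv; split=> // j ltjk [p [ep lp sp]].
by have [] := path_height_bound ep; rewrite lp sp; lia.
Qed.

(** A cycle has a vertex of maximal height, and its two cycle neighbours are
    distinct lower neighbours. *)
Lemma acyclic_height : symmetric e ->
  (forall x y z, e x y -> e x z -> h y < h x -> h z < h x -> y = z) -> acyclic e.
Proof.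
move=> esym lower_uniq [x [p [sz_p uniq_c ep elx]]].
have [z zc zmax] := arg_maxnP h (mem_head x p).
have [i c rot_c] := rot_to zc.
have cyc : cycle e (z :: c) by rewrite -rot_c rot_cycle /cycle rcons_path ep elx.
have uniq_zc : uniq (z :: c) by rewrite -rot_c rot_uniq.
have hmax w : w \in z :: c -> h w <= h z by rewrite -rot_c mem_rot => /zmax.
have sz_c : 2 <= size c by move: (congr1 size rot_c); rewrite size_rot /=; lia.
clear rot_c; case: c sz_c cyc uniq_zc hmax => [|a [|b c]] // _.
rewrite /cycle rcons_path => /andP[/andP[eza _] elz].
rewrite cons_uniq => /andP[_ /andP[nab _]] hmax.
have ezl : e z (last b c) by rewrite esym.
have hlow w : e z w -> w \in [:: z, a, b & c] -> h w < h z.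
  by move=> /edge_height ezw /hmax; lia.
have lc : last b c \in b :: c := mem_last b c.
have ha : h a < h z by apply: hlow eza _; rewrite !inE eqxx orbT.
have hl : h (last b c) < h z by apply: hlow ezl _; rewrite in_cons [_ \in a :: _]in_cons lc !orbT.
by move: nab; rewrite (lower_uniq _ _ _ eza ezl ha hl) lc.
Qed.

End Graphs.

Section Caterpillar.

Variable s : seq nat.
Hypothesis s_sorted : sorted ltn s.
Hypothesis s_head : head 0 s = 1.
Hypothesis s_gap : forall i, 0 < i < size s -> nth 0 s i - nth 0 s i.-1 <= 2.

Lemma size_s_gt0 : 0 < size s.
Proof. by case: s s_head. Qed.

Lemma nth_s0 : nth 0 s 0 = 1.
Proof. by case: s s_head. Qed.

Lemma nth_s_step i : i.+1 < size s -> nth 0 s i < nth 0 s i.+1 <= (nth 0 s i).+2.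
Proof.
move=> ltis; have := @s_gap i.+1; rewrite ltis /= => /(_ isT).
have : nth 0 s i < nth 0 s i.+1.
  by apply: (sorted_ltn_nth ltn_trans 0 s_sorted); rewrite ?inE //; lia.
lia.
Qed.

Lemma nth_s_addn_le i j : i <= j -> j < size s -> nth 0 s i + (j - i) <= nth 0 s j.
Proof.
elim: j => [|j IHj] leij ltjs; first by move: leij; rewrite leqn0 => /eqP ->; rewrite addn0.
case: (ltnP i j.+1) => [ltij|leji].
  by have := IHj (ltac:(lia)) (ltac:(lia)); have := nth_s_step ltjs; lia.
have -> : i = j.+1 by lia.
by rewrite subnn addn0.
Qed.

Lemma ltn_nth_s i : i < size s -> i < nth 0 s i.
Proof. by move=> ltis; have := nth_s_addn_le (leq0n i) ltis; rewrite nth_s0; lia. Qed.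

Lemma nth_s_inj (i j : 'I_(size s)) : nth 0 s i = nth 0 s j -> i = j.
Proof.
have uniq_s : uniq s := sorted_uniq ltn_trans ltnn s_sorted.
by move=> eqij; apply/val_inj/eqP; rewrite -(nth_uniq 0 (ltn_ord i) (ltn_ord j) uniq_s) eqij.
Qed.

Definition vertex := ('I_(size s) * bool)%type.

Definition label (v : vertex) : nat := nth 0 s v.1.

Definition height (v : vertex) : nat :=
  (size s).-1 - v.1 + (if v.2 then nth 0 s v.1 else 0).

(* For the last index, [nth 0 s i.+1 = 0], so [(i, true)] is spinal. *)
Definition spinal (v : vertex) : bool :=
  ~~ v.2 || (nth 0 s v.1.+1 != (nth 0 s v.1).+1).

Definition cat_edge : rel vertex := fun u v =>
  [|| [&& spinal u, spinal v & (height u == (height v).+1) || (height v == (height u).+1)],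
      ~~ spinal u && spinal v && (height u == (height v).+1) |
      spinal u && ~~ spinal v && (height v == (height u).+1)].

Definition top : nat := nth 0 s (size s).-1.

Lemma cat_edge_sym : symmetric cat_edge.
Proof. by move=> u v; rewrite /cat_edge; case: (spinal u); case: (spinal v); rewrite /= ?orbF // orbC. Qed.

Lemma cat_edge_irr : irreflexive cat_edge.
Proof. by move=> u; rewrite /cat_edge; case: (spinal u); rewrite /= ?orbF; lia. Qed.

Lemma cat_edge_height u v :
  cat_edge u v -> height u = (height v).+1 \/ height v = (height u).+1.
Proof. by rewrite /cat_edge; case: (spinal u); case: (spinal v); rewrite /= ?orbF //; lia. Qed.

Lemma cat_edge_down u v :
  cat_edge u v -> height v < height u -> spinal v && (height u == (height v).+1).
Proof. by rewrite /cat_edge; case: (spinal u); case: (spinal v); rewrite /= ?orbF //; lia. Qed.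

Lemma cat_edge_spinal u v : spinal u -> spinal v ->
  cat_edge u v = (height u == (height v).+1) || (height v == (height u).+1).
Proof. by move=> su sv; rewrite /cat_edge su sv /= !orbF. Qed.

Lemma height_le_top v : height v <= top.
Proof.
case: v => [[i ltis] []]; rewrite /height /top /=.
  by have := nth_s_addn_le (j := (size s).-1) (ltac:(lia) : i <= (size s).-1) (ltac:(lia)); lia.
by have := ltn_nth_s (ltac:(lia) : (size s).-1 < size s); lia.
Qed.

Lemma top_gt0 : 0 < top.
Proof.
have lt_last : (size s).-1 < size s by rewrite ltn_predL size_s_gt0.
exact: leq_ltn_trans (leq0n _) (ltn_nth_s lt_last).
Qed.

Lemma leaf_height v : ~~ spinal v -> 1 < height v.
Proof.
case: v => [[i ltis] []] //; rewrite /spinal /height /= => /negPn /eqP nth_succ.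
have ltis1 : i.+1 < size s by case: ltnP nth_succ => // ?; rewrite nth_default.
by have := ltn_nth_s ltis; lia.
Qed.

Lemma spinal_height_inj u v : spinal u -> spinal v -> height u = height v -> u = v.
Proof.
have height_lt (i j : 'I_(size s)) : i < j -> spinal (i, true) ->
    height (i, true) < height (j, true).
  rewrite /spinal /height /= => ltij /eqP ns1.
  have ltis1 : i.+1 < size s by have := ltn_ord j; lia.
  have := nth_s_step ltis1; have := nth_s_addn_le ltij (ltn_ord j); lia.
case: u => [i []]; case: v => [j []] su sv; rewrite /height /=.
- case: (ltngtP i j) => [ltij|ltji|/val_inj -> //].
  + by have := height_lt _ _ ltij su; rewrite /height /=; lia.
  + by have := height_lt _ _ ltji sv; rewrite /height /=; lia.
- by have := ltn_nth_s (ltn_ord i); lia.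
- by have := ltn_nth_s (ltn_ord j); lia.
- by move=> eqij; congr pair; apply: ord_inj; have := ltn_ord i; have := ltn_ord j; lia.
Qed.

Lemma spinal_height_surj p : p <= top -> exists v, spinal v && (height v == p).
Proof.
move=> le_ptop; case: (ltnP p (size s)) => [ltps|le_sp].
  have ltis : (size s).-1 - p < size s by lia.
  by exists (Ordinal ltis, false); rewrite /height /=; apply/eqP; lia.
pose below i := (i < size s) && ((size s).-1 - i + nth 0 s i <= p).
have below0 : below 0 by rewrite /below size_s_gt0 nth_s0 /=; have := size_s_gt0; lia.
have below_bound i : below i -> i <= size s by case/andP=> /ltnW.
have [i /andP[ltis le_ip] imax] := ex_maxnP (ex_intro below 0 below0) below_bound.
exists (Ordinal ltis, true); rewrite /spinal /height /=.
case: (ltnP i.+1 (size s)) => ltis1.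
- have : ~~ below i.+1 by apply/negP => /imax; lia.
  rewrite /below ltis1 /= -ltnNge; have := nth_s_step ltis1; lia.
- have ilast : i = (size s).-1 by lia.
  by rewrite nth_default; last lia; move: le_ptop; rewrite /top -ilast; lia.
Qed.

Definition spine (p : nat) : vertex :=
  odflt (Ordinal size_s_gt0, false) [pick v | spinal v && (height v == p)].

Lemma spine_spec p : p <= top -> spinal (spine p) /\ height (spine p) = p.
Proof.
rewrite /spine => le_ptop; case: pickP => [v /andP[sv /eqP hv] | none] //.
by have [v] := spinal_height_surj le_ptop; rewrite none.
Qed.

Lemma spine_height v : spinal v -> spine (height v) = v.
Proof.
move=> sv; have [sw hw] := spine_spec (height_le_top v).
exact: spinal_height_inj sw sv hw.
Qed.

Lemma cat_edge_spine p : p < top -> cat_edge (spine p) (spine p.+1).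
Proof.
move=> ltptop; have [sp hp] := spine_spec (ltnW ltptop).
have [sp1 hp1] := spine_spec ltptop.
by rewrite cat_edge_spinal // hp hp1 eqxx orbT.
Qed.

Lemma cat_edge_leaf u : ~~ spinal u -> cat_edge (spine (height u).-1) u.
Proof.
move=> lu; have hu := leaf_height lu.
have [sp hp] := spine_spec (leq_trans (leq_pred _) (height_le_top u)).
by rewrite /cat_edge sp (negbTE lu) hp /=; apply/eqP; lia.
Qed.

Lemma spine_walk p k : p + k <= top -> walk_of_len cat_edge (spine p) (spine (p + k)) k.
Proof.
elim: k => [|k IHk] le_top; first by rewrite addn0; apply: walk_refl.
rewrite addnS in le_top *.
exact: walk_rcons (IHk (ltnW le_top)) (cat_edge_spine le_top).
Qed.

Lemma spine_walk_to u p : p < height u -> walk_of_len cat_edge (spine p) u (height u - p).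
Proof.
move=> lt_pu; have le_top := height_le_top u.
case su: (spinal u).
  by have := spine_walk (p := p) (k := height u - p) (ltac:(lia)); rewrite subnKC ?spine_height // ltnW.
have -> : height u - p = ((height u).-1 - p).+1 by lia.
apply: walk_rcons (cat_edge_leaf (negbT su)).
by have := spine_walk (p := p) (k := (height u).-1 - p) (ltac:(lia)); rewrite subnKC //; lia.
Qed.

Lemma cat_edge_connected : connected_graph cat_edge.
Proof.
have walk0 u : exists k, walk_of_len cat_edge (spine 0) u k.
  case: (posnP (height u)) => [hu0|hu_gt0]; last by exists (height u - 0); apply: spine_walk_to.
  have su : spinal u by apply/negPn/negP => /leaf_height; rewrite hu0.
  by exists 0; move: (spine_height su); rewrite hu0 => ->; apply: walk_refl.
move=> u v; have [j wu] := walk0 u; have [k wv] := walk0 v.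
by exists (j + k); apply: walk_cat (walk_sym cat_edge_sym wu) wv.
Qed.

Lemma cat_edge_down_spine x y : cat_edge x y -> height y < height x -> y = spine (height x).-1.
Proof.
move=> exy ltyx; have /andP[sy /eqP hx] := cat_edge_down exy ltyx.
by rewrite hx /= spine_height.
Qed.

Lemma cat_edge_acyclic : acyclic cat_edge.
Proof.
apply: (acyclic_height cat_edge_height cat_edge_sym) => x y z exy exz hyx hzx.
by rewrite (cat_edge_down_spine exy hyx) (cat_edge_down_spine exz hzx).
Qed.

Lemma degree_leaf u : ~~ spinal u -> degree cat_edge u = 1.
Proof.
move=> lu; apply: (degree_eq1 (w := spine (height u).-1)) => y; apply/idP/eqP => [euy|->].
  have /andP[_ /eqP hu] : spinal y && (height u == (height y).+1).
    by move: euy; rewrite /cat_edge (negbTE lu) /= orbF.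
  by apply: cat_edge_down_spine euy _; rewrite hu.
by rewrite cat_edge_sym cat_edge_leaf.
Qed.

Lemma degree_spine_bottom x : spinal x -> height x = 0 -> degree cat_edge x = 1.
Proof.
move=> sx hx0; have top_pos := top_gt0.
apply: (degree_eq1 (w := spine 1)) => y; apply/idP/eqP => [exy|->].
  have hy1 : height y = 1 by case: (cat_edge_height exy); lia.
  have sy : spinal y by apply/negPn/negP => /leaf_height; lia.
  by rewrite -hy1 spine_height.
by rewrite -(spine_height sx) hx0 cat_edge_spine.
Qed.

Lemma degree_spine_top x : spinal x -> height x = top -> degree cat_edge x = 1.
Proof.
move=> sx hxtop; have top_pos := top_gt0.
apply: (degree_eq1 (w := spine top.-1)) => y; apply/idP/eqP => [exy|->].
  have := height_le_top y; rewrite -hxtop => le_yx.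
  have lt_yx : height y < height x by case: (cat_edge_height exy); lia.
  exact: cat_edge_down_spine exy lt_yx.
rewrite cat_edge_sym -(spine_height sx) hxtop.
by have := cat_edge_spine (p := top.-1) (ltac:(lia)); rewrite prednK.
Qed.

Lemma degree_spine_inner x : spinal x -> 0 < height x < top -> 1 < degree cat_edge x.
Proof.
move=> sx /andP[hx_gt0 hx_lt]; set h := height x.
have [sl hl] := spine_spec (leq_trans (leq_pred h) (height_le_top x)).
have [sr hr] := spine_spec hx_lt.
apply: (degree_gt1 (y := spine h.-1) (z := spine h.+1)).
- by rewrite cat_edge_spinal // hl; apply/orP; left; apply/eqP; lia.
- by rewrite cat_edge_spinal // hr eqxx orbT.
- by apply/eqP => eq_lr; move: hl; rewrite eq_lr hr; lia.
Qed.

Definition spine_seq : seq vertex := [seq spine p | p <- iota 1 top.-1].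

Lemma mem_spine_seq x : (x \in spine_seq) = spinal x && (0 < height x < top).
Proof.
apply/mapP/andP => [[p] | [sx hx]].
  by rewrite mem_iota => rng_p ->; have [-> ->] := spine_spec (ltac:(lia) : p <= top); lia.
by exists (height x); rewrite ?spine_height // mem_iota; lia.
Qed.

Lemma uniq_spine_seq : uniq spine_seq.
Proof.
rewrite map_inj_in_uniq ?iota_uniq // => p q; rewrite !mem_iota => rng_p rng_q eq_pq.
have [_ <-] := spine_spec (ltac:(lia) : p <= top).
by have [_ <-] := spine_spec (ltac:(lia) : q <= top); rewrite eq_pq.
Qed.

Lemma index_spine_seq x : x \in spine_seq -> index x spine_seq = (height x).-1.
Proof.
move=> x_in; have := x_in; rewrite mem_spine_seq => /andP[sx hx].
have lt_size : (height x).-1 < size spine_seq by rewrite size_map size_iota; lia.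
have x_nth : nth (spine 0) spine_seq (height x).-1 = x.
  rewrite (nth_map 0) ?size_iota ?nth_iota; try lia.
  by rewrite add1n prednK ?spine_height //; lia.
by rewrite -{1}x_nth index_uniq // uniq_spine_seq.
Qed.

Lemma mem_spine_seq_degree x : (x \in spine_seq) = (degree cat_edge x != 1).
Proof.
rewrite mem_spine_seq; case: (boolP (spinal x)) => [sx | lx] /=; last by rewrite degree_leaf.
have := height_le_top x; case: (posnP (height x)) => [hx0 | hx_gt0] hx_le.
  by rewrite degree_spine_bottom ?hx0.
have [hx_top | hx_ntop] := eqVneq (height x) top.
  by rewrite degree_spine_top ?hx_top ?ltnn ?andbF.
have hx_lt : height x < top by rewrite ltn_neqAle hx_ntop.
by rewrite hx_lt /=; apply/esym/eqP; have := degree_spine_inner sx (ltac:(lia)); lia.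
Qed.

Lemma cat_edge_caterpillar : caterpillar cat_edge.
Proof.
split.
  split; first by split; [exact: cat_edge_sym | exact: cat_edge_irr].
  by split; [exact: cat_edge_connected | exact: cat_edge_acyclic].
exists spine_seq; split => [|x|x y x_in y_in]; first exact: uniq_spine_seq.
  by rewrite mem_spine_seq_degree.
rewrite !index_spine_seq //; move: x_in y_in; rewrite !mem_spine_seq.
case/andP=> sx hx /andP[sy hy]; rewrite cat_edge_spinal //.
by apply/orP/orP => -[] /eqP hxy; [right | left | right | left]; apply/eqP; lia.
Qed.

Lemma dist_is_label_pair (i : 'I_(size s)) :
  dist_is cat_edge (i, false) (i, true) (nth 0 s i).
Proof.
have lt_heights : height (i, false) < height (i, true).
  by have := ltn_nth_s (ltn_ord i); rewrite /height /=; lia.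
apply: (dist_is_height cat_edge_height); last by rewrite /height /= addn0.
have := spine_walk_to lt_heights; rewrite spine_height //.
by rewrite /height /= addn0 addKn.
Qed.

Lemma label_distance_labeling : distance_labeling cat_edge s label.
Proof.
split=> [x | k k_in | [i b] [j c] neq_v /nth_s_inj /= eqij]; first exact: mem_nth.
  have lt_idx : index k s < size s by rewrite index_mem.
  by exists (Ordinal lt_idx, false); rewrite /label /= nth_index.
subst j; case: b c neq_v => [] []; rewrite ?eqxx // => _.
  exact: dist_is_sym cat_edge_sym (dist_is_label_pair i).
exact: dist_is_label_pair.
Qed.

Lemma card_label k : k \in s -> #|[pred x | label x == k]| = 2.
Proof.
move=> k_in; have lt_idx : index k s < size s by rewrite index_mem.
pose i := Ordinal lt_idx.
have -> : 2 = #|pred2 (i, false) (i, true)| by rewrite card2 xpair_eqE andbF.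
apply: eq_card => -[j b]; rewrite !inE /label /= -[k in _ == k](nth_index 0 k_in).
apply/eqP/orP => [/(@nth_s_inj j i) -> | [] /eqP [-> _] //].
by case: b; [right | left].
Qed.

End Caterpillar.

Theorem mainTheorem8 (s : seq nat)
  (Hsorted : sorted ltn s)
  (Hhead : head 0 s = 1)
  (Hgap : forall i, 0 < i < size s -> nth 0 s i - nth 0 s i.-1 <= 2) :
  delta_set s /\
  exists (T : finType) (e : rel T),
    [/\ caterpillar e,
        #|T| = 2 * size s &
        exists f : T -> nat,
          distance_labeling e s f /\
          forall k, k \in s -> #|[pred x | f x == k]| = 2].
Proof.
have cat := cat_edge_caterpillar Hsorted Hhead Hgap.
have lab := label_distance_labeling Hsorted Hhead Hgap.
have card := card_label Hsorted.
split.
  exists (vertex s), (@cat_edge s); split; first by case: cat => -[].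
  by exists (@label s); split=> // k k_in _; rewrite card.
exists (vertex s), (@cat_edge s); split=> //.
  by rewrite card_prod card_ord card_bool mulnC.
by exists (@label s).
Qed.
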